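(* Let $G$ be a finite group such that every column sum of its character table, $\Gamma_C(G)=\sum_{\chi\in\mathrm{Irr}(G)}\chi(C)$ for $C\in\mathrm{Conj}(G)$, is a nonnegative integer. Then (1) $s(G)\geq \Gamma_e(G)$; and (2) if in addition $G$ is totally orthogonal, then $s(G)\ge\Gamma_e(G)$, with $s(G)=\Gamma_e(G)$ if and only if $G$ is abelian.
   Context: For a finite group $G$, $\mathrm{Irr}(G)$ denotes the set of irreducible complex characters and $\mathrm{Conj}(G)$ the set of conjugacy classes; $s(G)$ is the sum of all entries of the character table, and $\Gamma_e(G)=\sum_{\chi\in\mathrm{Irr}(G)}\chi(e)$ is the sum of the irreducible character degrees. A finite group is totally orthogonal if every irreducible complex representation of it is realizable over $\mathbb{R}$. *)

From mathcomp Require Import all_boot all_order all_algebra all_fingroup all_solvable all_field all_character.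
Set Implicit Arguments. Unset Strict Implicit. Unset Printing Implicit Defensive.
Import GRing.Theory Num.Theory.
Local Open Scope ring_scope.

Definition col_sum (gT : finGroupType) (G : {group gT}) (C : {set gT}) : algC :=
  \sum_(i : Iirr G) 'chi[G]_i (repr C).

Definition s_sum (gT : finGroupType) (G : {group gT}) : algC :=
  \sum_(C in classes G) col_sum G C.

Definition Gamma_e (gT : finGroupType) (G : {group gT}) : algC :=
  \sum_(i : Iirr G) 'chi[G]_i 1%g.

Definition totally_orthogonal (gT : finGroupType) (G : {group gT}) : Prop :=
  forall i : Iirr G, exists n (rG : mx_representation algC G n),
    (forall g, g \in G -> forall j k, rG g j k \is Num.real) /\
    cfRepr rG = 'chi[G]_i.

From mathcomp Require Import all_boot all_order all_algebra all_fingroup all_solvable all_field all_character.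

Set Implicit Arguments.
Unset Strict Implicit.
Unset Printing Implicit Defensive.

Import GRing.Theory Num.Theory.
Local Open Scope ring_scope.

(* The column sums are the values of the class function theta = sum of all
   irreducible characters, and s(G) = Gamma_e(G) + sum of the column sums at
   the nontrivial classes; with nonnegative column sums this gives
   s(G) >= Gamma_e(G), with equality iff theta vanishes off 1. Since
   '[theta, chi] = 1 for every irreducible chi, theta vanishes off 1 exactly
   when it is a multiple of the regular character, i.e. when all irreducible
   degrees are equal to chi_0(1) = 1, i.e. when G is abelian. *)

Section ColumnSums.

Variables (gT : finGroupType) (G : {group gT}).

Definition cfIrrSum : 'CF(G) := \sum_i 'chi[G]_i.

Lemma col_sumE C : col_sum G C = cfIrrSum (repr C).
Proof. by rewrite /col_sum sum_cfunE. Qed.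

Lemma s_sumE :
  s_sum G = Gamma_e G + \sum_(C in classes G | C != 1%g) col_sum G C.
Proof.
rewrite /s_sum (bigD1 1%g) ?classes1 //=; congr (_ + _).
by rewrite /col_sum /Gamma_e repr_set1.
Qed.

Lemma cfun_on1P (phi : 'CF(G)) :
  reflect {in classes G, forall C, C != 1%g -> phi (repr C) = 0}
          (phi \in 'CF(G, [1])).
Proof.
apply: (iffP idP) => [phi1 C CG ntC | phi0].
  apply: (cfun_on0 phi1); rewrite inE; apply: contra ntC => /eqP C1.
  by case/repr_classesP: CG => _ ->; rewrite C1 class1G.
apply/cfun_onP => x; rewrite inE => ntx.
have [Gx | /cfun0//] := boolP (x \in G).
by rewrite -cfun_repr phi0 ?mem_classes ?classG_eq1.
Qed.

Lemma cfdot_cfIrrSum_irr i : '[cfIrrSum, 'chi[G]_i] = 1.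
Proof.
rewrite cfdot_suml (bigD1 i) //= cfdot_irr eqxx big1 ?addr0 // => j /negbTE ji.
by rewrite cfdot_irr ji.
Qed.

Lemma cfIrrSum_abelian : abelian G -> cfIrrSum = cfReg G.
Proof.
move/char_abelianP=> linG; rewrite cfReg_sum; apply: eq_bigr => i _.
by rewrite lin_char1 ?scale1r.
Qed.

Lemma cfIrrSum_on1_irr1 i : cfIrrSum \in 'CF(G, [1]) -> 'chi[G]_i 1%g = 1.
Proof.
move=> theta1.
have dotE j : 1 = #|G|%:R^-1 * cfIrrSum 1%g * 'chi[G]_j 1%g.
  rewrite -[LHS](cfdot_cfIrrSum_irr j) (cfdotEl _ theta1) big_set1 mulrA.
  by rewrite irr1_degree conjC_nat.
have norm1 : #|G|%:R^-1 * cfIrrSum 1%g = 1.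
  by rewrite [RHS](dotE 0) irr0 cfun11 mulr1.
by have := dotE i; rewrite norm1 mul1r.
Qed.

Lemma abelian_cfIrrSum_on1 : abelian G = (cfIrrSum \in 'CF(G, [1])).
Proof.
apply/idP/idP => [cGG | theta1].
  by rewrite cfIrrSum_abelian // rpredZ ?cfuni_on.
apply/char_abelianP => i.
by rewrite qualifE /= irr_char /= cfIrrSum_on1_irr1.
Qed.

Lemma abelian_col_sumP :
  reflect {in classes G, forall C, C != 1%g -> col_sum G C = 0} (abelian G).
Proof.
rewrite abelian_cfIrrSum_on1; apply: (iffP (cfun_on1P _)) => h0 C CG ntC.
  by rewrite col_sumE h0.
by rewrite -col_sumE h0.
Qed.

Hypothesis col_sum_ge0 : {in classes G, forall C, 0 <= col_sum G C}.

Lemma Gamma_e_le_s_sum : Gamma_e G <= s_sum G.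
Proof.
rewrite s_sumE lerDl sumr_ge0 // => C /andP[CG _].
exact: col_sum_ge0.
Qed.

Lemma s_sum_eq_Gamma_e : s_sum G = Gamma_e G <-> abelian G.
Proof.
have nt_ge0 C : (C \in classes G) && (C != 1%g) -> 0 <= col_sum G C.
  by case/andP=> CG _; apply: col_sum_ge0.
split=> [eqG | /abelian_col_sumP col0].
  apply/abelian_col_sumP => C CG ntC.
  have sum0 : \sum_(D in classes G | D != 1%g) col_sum G D = 0.
    by apply: (addrI (Gamma_e G)); rewrite addr0 -s_sumE.
  by apply: (psumr_eq0P nt_ge0 sum0); rewrite CG.
by rewrite s_sumE big1 ?addr0 // => C /andP[]; apply: col0.
Qed.

End ColumnSums.

Theorem proposition2p6 (gT : finGroupType) (G : {group gT}) :
  (forall C, C \in classes G -> col_sum G C \in Num.nat) ->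
  Gamma_e G <= s_sum G /\
  (totally_orthogonal G ->
     Gamma_e G <= s_sum G /\ (s_sum G = Gamma_e G <-> abelian G)).
Proof.
move=> col_sum_nat.
have col_sum_ge0 : {in classes G, forall C, 0 <= col_sum G C}.
  by move=> C /col_sum_nat/natr_ge0.
have le_Gamma_s := Gamma_e_le_s_sum col_sum_ge0.
by split=> // _; split; last exact: s_sum_eq_Gamma_e.
Qed.
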